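(* Under the standing setting, if $f_0\in(0,\infty]$ and $f_\infty\in(0,\infty]$, then there exists $\underline\lambda>0$ such that problem (P$_\lambda$) has no positive solution for any $\lambda>\underline\lambda$.
   Context: Standing setting. $\varphi:\mathbb{R}\to\mathbb{R}$ is an odd, increasing homeomorphism satisfying condition (A): there exist increasing homeomorphisms $\psi_1,\psi_2:[0,\infty)\to[0,\infty)$ such that $\varphi(x)\psi_1(y)\le \varphi(xy)\le \varphi(x)\psi_2(y)$ for all $x,y\ge 0$. Let $c,d\in C([0,1],(0,\infty))$, and $\|\cdot\|_\infty$ the maximum norm on $C[0,1]$. Let $f\in C([0,\infty),[0,\infty))$ with $f(s)>0$ for $s>0$, and write $f_0=\lim_{s\to0^+}f(s)/\varphi(s)$, $f_\infty=\lim_{s\to\infty}f(s)/\varphi(s)$ (assumed to exist in $[0,\infty]$ whenever referred to). Let $h\in C((0,1),[0,\infty))$, $h\not\equiv 0$, with $\int_0^{1/2}\psi_1^{-1}\big(\int_s^{1/2}h(\tau)d\tau\big)ds+\int_{1/2}^1\psi_1^{-1}\big(\int_{1/2}^s h(\tau)d\tau\big)ds<\infty$. Notation attached to $h$: $\alpha_h=\sup\{x\in(0,1): h=0 \text{ on }(0,x)\}$ ($0$ if empty); $\beta_h=\inf\{x\in(0,1): h=0\text{ on }(x,1)\}$ ($1$ if empty); $\bar\alpha_h=\sup\{x\in(\alpha_h,1]: h>0 \text{ on }(\alpha_h,x)\}$; $\bar\beta_h=\inf\{x\in[0,\beta_h): h>0\text{ on }(x,\beta_h)\}$; $\gamma_h^1=(3\alpha_h+\bar\alpha_h)/4$,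 $\gamma_h^2=(\bar\beta_h+3\beta_h)/4$. It is assumed that $0\le\alpha_h<\gamma_h^1<\gamma_h^2<\beta_h\le 1$. For $\lambda\ge0$, problem (P$_\lambda$) is: $(d(t)\varphi(c(t)u'(t)))'+\lambda h(t)f(u(t))=0$ for $t\in(0,1)$, $u(0)=u(1)=0$. A solution is $u\in C[0,1]\cap C^1(0,1)$ such that $t\mapsto d(t)\varphi(c(t)u'(t))$ is continuously differentiable on $(0,1)$ and the equation and boundary conditions hold; it is positive if $u(t)>0$ for all $t\in(0,1)$. *)

From Stdlib Require Import Reals Lra ClassicalEpsilon.
Open Scope R_scope.

Definition cont_on_cc (f : R -> R) (a b : R) : Prop :=
  forall x, a <= x <= b -> continue_in f (fun y => a <= y <= b) x.

Definition cont_on_nonneg (f : R -> R) : Prop :=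
  forall x, 0 <= x -> continue_in f (fun y => 0 <= y) x.

Definition odd_inc_homeo (phi : R -> R) : Prop :=
  (forall x, phi (- x) = - phi x) /\
  (forall x y, x < y -> phi x < phi y) /\
  continuity phi /\
  (forall y, exists x, phi x = y).

(* psi : [0,oo) -> [0,oo) increasing homeomorphism (values outside [0,oo) irrelevant) *)
Definition inc_homeo_nonneg (psi : R -> R) : Prop :=
  (forall x, 0 <= x -> 0 <= psi x) /\
  (forall x y, 0 <= x -> x < y -> psi x < psi y) /\
  cont_on_nonneg psi /\
  (forall y, 0 <= y -> exists x, 0 <= x /\ psi x = y).

Definition condA (phi psi1 psi2 : R -> R) : Prop :=
  inc_homeo_nonneg psi1 /\ inc_homeo_nonneg psi2 /\
  (forall x y, 0 <= x -> 0 <= y ->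
     phi x * psi1 y <= phi (x * y) /\ phi (x * y) <= phi x * psi2 y).

(* inverse of psi on [0,oo) (unique when psi is a homeomorphism of [0,oo)) *)
Definition inv_nonneg (psi : R -> R) (y : R) : R :=
  epsilon (inhabits 0) (fun x => 0 <= x /\ psi x = y).

(* Riemann integral of f over [a,b] (the value RiemannInt when integrable) *)
Definition RInt (f : R -> R) (a b : R) : R :=
  epsilon (inhabits 0) (fun v => exists pr : Riemann_integrable f a b, RiemannInt pr = v).

(* finiteness of the improper integral of a nonnegative g on (a,b] *)
Definition improper_finite_left (g : R -> R) (a b : R) : Prop :=
  exists M, forall x, a < x <= b ->
    exists pr : Riemann_integrable g x b, RiemannInt pr <= M.

(* finiteness of the improper integral of a nonnegative g on [a,b) *)
Definition improper_finite_right (g : R -> R) (a b : R) : Prop :=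
  exists M, forall y, a <= y < b ->
    exists pr : Riemann_integrable g a y, RiemannInt pr <= M.

Definition h_integrability (psi1 h : R -> R) : Prop :=
  improper_finite_left (fun s => inv_nonneg psi1 (RInt h s (1/2))) 0 (1/2) /\
  improper_finite_right (fun s => inv_nonneg psi1 (RInt h (1/2) s)) (1/2) 1.

Definition is_glb (S : R -> Prop) (m : R) : Prop :=
  (forall x, S x -> m <= x) /\ (forall m', (forall x, S x -> m' <= x) -> m' <= m).

(* alpha_h = sup {x in (0,1) : h = 0 on (0,x)}, 0 if empty *)
Definition alpha_set (h : R -> R) (x : R) : Prop :=
  0 < x < 1 /\ forall t, 0 < t < x -> h t = 0.
Definition is_alpha_h (h : R -> R) (a : R) : Prop :=
  ((forall x, ~ alpha_set h x) /\ a = 0) \/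
  ((exists x, alpha_set h x) /\ is_lub (alpha_set h) a).

(* beta_h = inf {x in (0,1) : h = 0 on (x,1)}, 1 if empty *)
Definition beta_set (h : R -> R) (x : R) : Prop :=
  0 < x < 1 /\ forall t, x < t < 1 -> h t = 0.
Definition is_beta_h (h : R -> R) (b : R) : Prop :=
  ((forall x, ~ beta_set h x) /\ b = 1) \/
  ((exists x, beta_set h x) /\ is_glb (beta_set h) b).

Definition abar_set (h : R -> R) (a x : R) : Prop :=
  a < x <= 1 /\ forall t, a < t < x -> 0 < h t.
Definition is_abar_h (h : R -> R) (a ab : R) : Prop := is_lub (abar_set h a) ab.

Definition bbar_set (h : R -> R) (b x : R) : Prop :=
  0 <= x < b /\ forall t, x < t < b -> 0 < h t.
Definition is_bbar_h (h : R -> R) (b bb : R) : Prop := is_glb (bbar_set h b) bb.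

(* standing assumption 0 <= alpha_h < gamma_h^1 < gamma_h^2 < beta_h <= 1 *)
Definition h_gamma_assumption (h : R -> R) : Prop :=
  exists a b ab bb,
    is_alpha_h h a /\ is_beta_h h b /\ is_abar_h h a ab /\ is_bbar_h h b bb /\
    0 <= a /\ a < (3 * a + ab) / 4 /\ (3 * a + ab) / 4 < (bb + 3 * b) / 4 /\
    (bb + 3 * b) / 4 < b /\ b <= 1.

Definition lim_at_0plus (g : R -> R) (L : R) : Prop :=
  forall eps, 0 < eps -> exists del, 0 < del /\
    forall s, 0 < s < del -> Rabs (g s - L) < eps.
Definition tends_pinf_at_0plus (g : R -> R) : Prop :=
  forall M, exists del, 0 < del /\ forall s, 0 < s < del -> M < g s.
Definition lim_at_pinf (g : R -> R) (L : R) : Prop :=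
  forall eps, 0 < eps -> exists N, forall s, N < s -> Rabs (g s - L) < eps.
Definition tends_pinf_at_pinf (g : R -> R) : Prop :=
  forall M, exists N, forall s, N < s -> M < g s.

Definition f0_pos (phi f : R -> R) : Prop :=
  (exists L, 0 < L /\ lim_at_0plus (fun s => f s / phi s) L) \/
  tends_pinf_at_0plus (fun s => f s / phi s).
Definition finf_pos (phi f : R -> R) : Prop :=
  (exists L, 0 < L /\ lim_at_pinf (fun s => f s / phi s) L) \/
  tends_pinf_at_pinf (fun s => f s / phi s).

Definition is_solution (phi c d h f : R -> R) (lam : R) (u : R -> R) : Prop :=
  cont_on_cc u 0 1 /\
  exists u' : R -> R,
    (forall t, 0 < t < 1 -> derivable_pt_lim u t (u' t)) /\
    (forall t, 0 < t < 1 -> continuity_pt u' t) /\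
    exists w' : R -> R,
      (forall t, 0 < t < 1 ->
         derivable_pt_lim (fun s => d s * phi (c s * u' s)) t (w' t)) /\
      (forall t, 0 < t < 1 -> continuity_pt w' t) /\
      (forall t, 0 < t < 1 -> w' t + lam * h t * f (u t) = 0) /\
      u 0 = 0 /\ u 1 = 0.

Definition is_positive_solution (phi c d h f : R -> R) (lam : R) (u : R -> R) : Prop :=
  is_solution phi c d h f lam u /\ (forall t, 0 < t < 1 -> 0 < u t).

From Stdlib Require Import Reals Lra.
Open Scope R_scope.

(* The flux of a solution, W t = d t * phi (c t * u' t), satisfies
   W' = - lam h f(u) <= 0, so W is nonincreasing.  Pick an interval [a,b]
   on which h >= h0 > 0 and its midpoint t0.  If W t0 >= 0 then u is
   nondecreasing on (0,t0]; integrating W' over [a,t0] bounds W a from below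
   by lam h0 mf (t0 - a) phi(u a), where f >= mf phi on (0,oo) (this uses
   f_0, f_oo > 0); the mean value theorem on [a/2,a] together with condition
   (A) bounds W a from above by Dd psi2(Cc/(a/2)) phi(u a), where Cc, Dd bound
   c, d.  Dividing by phi(u a) > 0 bounds lam.  If W t0 < 0 the same argument
   applies after the reflection t |-> 1 - t.  The file proves these estimates
   for abstract data (OneSided), transfers them to positive solutions
   (PositiveSolution) and concludes. *)

Lemma continuity_pt_of_interior (g : R -> R) (D : R -> Prop) (x e : R) :
  continue_in g D x -> 0 < e -> (forall y, Rabs (y - x) < e -> D y) ->
  continuity_pt g x.
Proof.
  intros Hg He HD eps Heps.
  destruct (Hg eps Heps) as [alp [Halp Hclose]].
  exists (Rmin alp e). split; [apply Rmin_pos; lra|].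
  intros y [[_ Hyx] Hdist]; simpl in *; unfold R_dist in *.
  pose proof (Rmin_l alp e); pose proof (Rmin_r alp e).
  apply Hclose. simpl; unfold R_dist. split; [split; [apply HD|]|]; auto; lra.
Qed.

Lemma bounded_on_inner_segment (g : R -> R) (p q : R) :
  cont_on_cc g 0 1 -> 0 < p -> p <= q -> q < 1 ->
  exists C, forall t, p <= t <= q -> g t <= C.
Proof.
  intros Hg Hp Hpq Hq.
  assert (Hcont : forall t, p <= t <= q -> continuity_pt g t).
  { intros t Ht.
    apply (continuity_pt_of_interior g (fun y => 0 <= y <= 1) t (Rmin t (1 - t))).
    - apply Hg; lra.
    - apply Rmin_pos; lra.
    - intros y Hy. apply Rabs_def2 in Hy.
      pose proof (Rmin_l t (1 - t)); pose proof (Rmin_r t (1 - t)); lra. }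
  destruct (continuity_ab_maj g p q Hpq Hcont) as [M [HM _]].
  exists (g M). exact HM.
Qed.

Lemma positive_lower_bound_on_segment (g : R -> R) (x y : R) :
  x <= y -> (forall s, x <= s <= y -> continuity_pt g s) ->
  (forall s, x <= s <= y -> 0 < g s) ->
  exists k, 0 < k /\ forall s, x <= s <= y -> k <= g s.
Proof.
  intros Hxy Hcont Hpos.
  destruct (continuity_ab_min g x y Hxy Hcont) as [s0 [Hmin Hs0]].
  exists (g s0). split; [apply Hpos|]; auto.
Qed.

Lemma derivable_pt_lim_reflect (g : R -> R) (x l : R) :
  derivable_pt_lim g (1 - x) l -> derivable_pt_lim (fun s => g (1 - s)) x (- l).
Proof.
  intros Hg.
  assert (Hlin : derivable_pt_lim (fun s => 1 - s) x (0 - 1)).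
  { apply derivable_pt_lim_minus; [apply derivable_pt_lim_const | apply derivable_pt_lim_id]. }
  replace (- l) with (l * (0 - 1)) by ring.
  exact (derivable_pt_lim_comp (fun s => 1 - s) g x (0 - 1) l Hlin Hg).
Qed.

Section Phi.
Variable phi : R -> R.
Hypothesis Hphi : odd_inc_homeo phi.

Lemma phi_zero : phi 0 = 0.
Proof.
  destruct Hphi as [Hodd _]. pose proof (Hodd 0) as H0.
  rewrite Ropp_0 in H0. lra.
Qed.

Lemma phi_le (x y : R) : x <= y -> phi x <= phi y.
Proof.
  destruct Hphi as [_ [Hinc _]]. intros [Hlt | ->]; [left; auto | lra].
Qed.

Lemma phi_pos (x : R) : 0 < x -> 0 < phi x.
Proof. destruct Hphi as [_ [Hinc _]]. intros Hx. rewrite <- phi_zero. auto. Qed.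

Lemma phi_nonneg_inv (x : R) : 0 <= phi x -> 0 <= x.
Proof.
  intros Hx. destruct (Rle_or_lt 0 x) as [H | Hneg]; auto.
  destruct Hphi as [_ [Hinc _]].
  pose proof (Hinc _ _ Hneg). rewrite phi_zero in *. lra.
Qed.
End Phi.

Lemma ratio_lower_near_zero (phi f : R -> R) :
  f0_pos phi f ->
  exists k del, 0 < k /\ 0 < del /\ forall s, 0 < s < del -> k <= f s / phi s.
Proof.
  intros [[L [HL Hlim]] | Hinf].
  - destruct (Hlim (L / 2)) as [del [Hdel Hclose]]; [lra|].
    exists (L / 2), del. repeat split; try lra.
    intros s Hs. specialize (Hclose s Hs). apply Rabs_def2 in Hclose. lra.
  - destruct (Hinf 1) as [del [Hdel Hbig]].
    exists 1, del. repeat split; try lra.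
    intros s Hs. left. exact (Hbig s Hs).
Qed.

Lemma ratio_lower_near_infinity (phi f : R -> R) :
  finf_pos phi f -> exists k N, 0 < k /\ forall s, N < s -> k <= f s / phi s.
Proof.
  intros [[L [HL Hlim]] | Hinf].
  - destruct (Hlim (L / 2)) as [N Hclose]; [lra|].
    exists (L / 2), N. split; [lra|].
    intros s Hs. specialize (Hclose s Hs). apply Rabs_def2 in Hclose. lra.
  - destruct (Hinf 1) as [N Hbig].
    exists 1, N. split; [lra|]. intros s Hs. left. exact (Hbig s Hs).
Qed.

(* Consequently f >= mf phi on (0,oo) for some mf > 0: between the two
   asymptotic regimes f/phi is positive and continuous on a segment. *)
Lemma f_lower_bound (phi f : R -> R) :
  odd_inc_homeo phi -> cont_on_nonneg f -> (forall s, 0 < s -> 0 < f s) ->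
  f0_pos phi f -> finf_pos phi f ->
  exists mf, 0 < mf /\ forall s, 0 < s -> mf * phi s <= f s.
Proof.
  intros Hphi Hfc Hfp Hf0 Hfinf.
  destruct (ratio_lower_near_zero phi f Hf0) as [k1 [d1 [Hk1 [Hd1 Hsmall]]]].
  destruct (ratio_lower_near_infinity phi f Hfinf) as [k2 [N [Hk2 Hlarge]]].
  assert (Hmid : exists k3, 0 < k3 /\
            forall s, d1 <= s <= Rmax N d1 -> k3 <= f s / phi s).
  { apply positive_lower_bound_on_segment; [apply Rmax_r | |].
    - intros s Hs.
      assert (Hfs : continuity_pt f s).
      { apply (continuity_pt_of_interior f (fun y => 0 <= y) s s);
          [apply Hfc; lra | lra |].
        intros y Hy. apply Rabs_def2 in Hy. lra. }
      pose proof Hphi as [_ [_ [Hphic _]]].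
      apply continuity_pt_div; auto.
      pose proof (phi_pos phi Hphi s); lra.
    - intros s Hs. apply Rdiv_lt_0_compat; [apply Hfp | apply phi_pos]; auto; lra. }
  destruct Hmid as [k3 [Hk3 Hmid]].
  exists (Rmin k1 (Rmin k2 k3)). split; [repeat apply Rmin_pos; auto|].
  intros s Hs.
  assert (Hratio : Rmin k1 (Rmin k2 k3) <= f s / phi s).
  { pose proof (Rmin_l k1 (Rmin k2 k3)); pose proof (Rmin_r k1 (Rmin k2 k3)).
    pose proof (Rmin_l k2 k3); pose proof (Rmin_r k2 k3).
    destruct (Rlt_or_le s d1) as [Hs1 | Hs1]; [pose proof (Hsmall s (conj Hs Hs1)); lra|].
    destruct (Rlt_or_le N s) as [Hs2 | Hs2]; [pose proof (Hlarge s Hs2); lra|].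
    pose proof (Rmax_l N d1). pose proof (Hmid s ltac:(lra)). lra. }
  pose proof (phi_pos phi Hphi s Hs) as Hps.
  apply Rmult_le_compat_r with (r := phi s) in Hratio; [|lra].
  unfold Rdiv in Hratio. rewrite Rmult_assoc, Rinv_l in Hratio; lra.
Qed.

Lemma h_positive_segment (h : R -> R) :
  (forall t, 0 < t < 1 -> continuity_pt h t) ->
  (forall t, 0 < t < 1 -> 0 <= h t) ->
  (exists t, 0 < t < 1 /\ h t <> 0) ->
  exists a b h0, 0 < a < b /\ b < 1 /\ 0 < h0 /\ forall t, a <= t <= b -> h0 <= h t.
Proof.
  intros Hcont Hnonneg [t0 [Ht0 Hnz]].
  assert (Hpos : 0 < h t0) by (pose proof (Hnonneg t0 Ht0); lra).
  destruct (Hcont t0 Ht0 (h t0 / 2)) as [alp [Halp Hclose]]; [lra|].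
  set (r := Rmin alp (Rmin t0 (1 - t0)) / 2).
  assert (Hr : 0 < r /\ r < alp /\ r < t0 /\ r < 1 - t0).
  { unfold r. pose proof (Rmin_l alp (Rmin t0 (1 - t0))).
    pose proof (Rmin_r alp (Rmin t0 (1 - t0))).
    pose proof (Rmin_l t0 (1 - t0)); pose proof (Rmin_r t0 (1 - t0)).
    assert (0 < Rmin alp (Rmin t0 (1 - t0))) by (repeat apply Rmin_pos; lra).
    lra. }
  exists (t0 - r), (t0 + r), (h t0 / 2). repeat split; try lra.
  intros t Ht. destruct (Req_dec t t0) as [-> | Hne]; [lra|].
  assert (Hdist : Rabs (h t - h t0) < h t0 / 2).
  { apply Hclose. split; [split; [exact I | auto]|].
    simpl; unfold R_dist. apply Rabs_def1; lra. }
  apply Rabs_def2 in Hdist. lra.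
Qed.

Section OneSided.
Variables phi psi1 psi2 : R -> R.
Hypothesis Hphi : odd_inc_homeo phi.
Hypothesis HA : condA phi psi1 psi2.
Variables u u' W w' c d : R -> R.
Variables m p a t0 Cc Dd : R.
Hypothesis Hm : 0 <= m.
Hypothesis Hord : p < a < t0.
Hypothesis Hu_der : forall t, p <= t <= t0 -> derivable_pt_lim u t (u' t).
Hypothesis HW_der : forall t, p <= t <= t0 -> derivable_pt_lim W t (w' t).
Hypothesis HW_flux : forall t, p <= t <= t0 -> W t = d t * phi (c t * u' t).
Hypothesis Hw'_nonpos : forall t, p <= t <= t0 -> w' t <= 0.
Hypothesis Hforcing : forall t, a <= t <= t0 -> m * phi (u t) <= - w' t.
Hypothesis Hcd_pos : forall t, p <= t <= t0 -> 0 < c t /\ 0 < d t.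
Hypothesis Hcd_bound : forall t, p <= t <= a -> c t <= Cc /\ d t <= Dd.
Hypothesis Hu_p : 0 < u p.
Hypothesis HW_t0 : 0 <= W t0.

Lemma flux_nonincreasing (x y : R) : p <= x -> x < y -> y <= t0 -> W y <= W x.
Proof.
  intros Hx Hxy Hy.
  destruct (MVT_cor2 W w' x y Hxy) as [z [Hz Hzin]]; [intros t Ht; apply HW_der; lra|].
  pose proof (Hw'_nonpos z ltac:(lra)). nra.
Qed.

Lemma flux_nonneg (t : R) : p <= t <= t0 -> 0 <= W t.
Proof.
  intros Ht. destruct (Req_dec t t0) as [-> | Hne]; auto.
  pose proof (flux_nonincreasing t t0). lra.
Qed.

Lemma slope_nonneg (t : R) : p <= t <= t0 -> 0 <= u' t.
Proof.
  intros Ht. destruct (Hcd_pos t Ht) as [Hc Hd].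
  pose proof (flux_nonneg t Ht) as HW. rewrite HW_flux in HW by exact Ht.
  assert (Hphi_nn : 0 <= phi (c t * u' t)).
  { apply Rmult_le_reg_l with (d t); lra. }
  apply (phi_nonneg_inv phi Hphi) in Hphi_nn. nra.
Qed.

Lemma u_nondecreasing (x y : R) : p <= x -> x <= y -> y <= t0 -> u x <= u y.
Proof.
  intros Hx [Hxy | ->] Hy; [|lra].
  destruct (MVT_cor2 u u' x y Hxy) as [z [Hz Hzin]]; [intros t Ht; apply Hu_der; lra|].
  pose proof (slope_nonneg z ltac:(lra)). nra.
Qed.

(* Integrating the forcing over [a,t0]. *)
Lemma flux_lower_bound : m * (t0 - a) * phi (u a) <= W a.
Proof.
  destruct (MVT_cor2 W w' a t0) as [xi [Hxi Hxiin]]; [lra | intros t Ht; apply HW_der; lra|].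
  assert (Hmono : phi (u a) <= phi (u xi)).
  { apply (phi_le phi Hphi). apply u_nondecreasing; lra. }
  pose proof (Hforcing xi ltac:(lra)).
  assert (m * phi (u a) <= m * phi (u xi)) by (apply Rmult_le_compat_l; auto).
  nra.
Qed.

(* The mean value theorem on [p,a] and condition (A). *)
Lemma flux_upper_bound : W a <= Dd * psi2 (Cc / (a - p)) * phi (u a).
Proof.
  destruct HA as [_ [_ Hscale]].
  destruct (MVT_cor2 u u' p a) as [xi [Hxi Hxiin]]; [lra | intros t Ht; apply Hu_der; lra|].
  destruct (Hcd_pos xi ltac:(lra)) as [Hc Hd].
  destruct (Hcd_bound xi ltac:(lra)) as [HC HD].
  pose proof (slope_nonneg xi ltac:(lra)) as Hslope.
  assert (Hua : 0 <= u a) by (pose proof (u_nondecreasing p a); lra).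
  assert (Hratio : 0 <= Cc / (a - p)).
  { destruct (Hcd_pos p ltac:(lra)); destruct (Hcd_bound p ltac:(lra)).
    left. apply Rdiv_lt_0_compat; lra. }
  assert (Harg : c xi * u' xi <= u a * (Cc / (a - p))).
  { replace (u a * (Cc / (a - p))) with (Cc * ((u a - u p) / (a - p) + u p / (a - p)))
      by (field; lra).
    rewrite Hxi.
    replace (u' xi * (a - p) / (a - p)) with (u' xi) by (field; lra).
    assert (0 < u p / (a - p)) by (apply Rdiv_lt_0_compat; lra).
    apply Rmult_le_compat; lra. }
  pose proof (phi_le phi Hphi _ _ Harg) as Hphiarg.
  destruct (Hscale (u a) (Cc / (a - p)) Hua Hratio) as [_ Hpsi].
  assert (Hflux_nn : 0 <= phi (c xi * u' xi)).
  { rewrite <- (phi_zero phi Hphi). apply (phi_le phi Hphi). nra. }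
  pose proof (flux_nonincreasing xi a ltac:(lra) ltac:(lra) ltac:(lra)).
  rewrite (HW_flux xi) in * by lra.
  assert (d xi * phi (c xi * u' xi) <= Dd * phi (c xi * u' xi))
    by (apply Rmult_le_compat_r; lra).
  assert (Dd * phi (c xi * u' xi) <= Dd * (phi (u a) * psi2 (Cc / (a - p))))
    by (apply Rmult_le_compat_l; lra).
  lra.
Qed.

Lemma one_sided_bound : m * (t0 - a) <= Dd * psi2 (Cc / (a - p)).
Proof.
  assert (Hua : 0 < phi (u a)).
  { apply (phi_pos phi Hphi). pose proof (u_nondecreasing p a); lra. }
  apply Rmult_le_reg_r with (phi (u a)); auto.
  pose proof flux_lower_bound; pose proof flux_upper_bound. lra.
Qed.
End OneSided.

(* The mirror image of one_sided_bound, on [t0,q] with W t0 <= 0, obtained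
   by reflecting the data through t |-> 1 - t (phi is odd). *)
Lemma one_sided_bound_right (phi psi1 psi2 u u' W w' c d : R -> R)
    (m t0 b q Cc Dd : R) :
  odd_inc_homeo phi -> condA phi psi1 psi2 -> 0 <= m -> t0 < b < q ->
  (forall t, t0 <= t <= q -> derivable_pt_lim u t (u' t)) ->
  (forall t, t0 <= t <= q -> derivable_pt_lim W t (w' t)) ->
  (forall t, t0 <= t <= q -> W t = d t * phi (c t * u' t)) ->
  (forall t, t0 <= t <= q -> w' t <= 0) ->
  (forall t, t0 <= t <= b -> m * phi (u t) <= - w' t) ->
  (forall t, t0 <= t <= q -> 0 < c t /\ 0 < d t) ->
  (forall t, b <= t <= q -> c t <= Cc /\ d t <= Dd) ->
  0 < u q -> W t0 <= 0 ->
  m * (b - t0) <= Dd * psi2 (Cc / (q - b)).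
Proof.
  intros Hphi HA Hm Hord Hu HW Hflux Hw' Hforcing Hcd Hbound Huq HWt0.
  replace (b - t0) with ((1 - t0) - (1 - b)) by ring.
  replace (q - b) with ((1 - b) - (1 - q)) by ring.
  apply (one_sided_bound phi psi1 psi2 Hphi HA
           (fun s => u (1 - s)) (fun s => - u' (1 - s))
           (fun s => - W (1 - s)) (fun s => w' (1 - s))
           (fun s => c (1 - s)) (fun s => d (1 - s))); try lra.
  - intros t Ht. apply derivable_pt_lim_reflect, Hu. lra.
  - intros t Ht. rewrite <- (Ropp_involutive (w' (1 - t))).
    apply (derivable_pt_lim_opp (fun s => W (1 - s))).
    apply derivable_pt_lim_reflect, HW. lra.
  - intros t Ht. destruct Hphi as [Hodd _].
    rewrite Hflux by lra. replace (c (1 - t) * - u' (1 - t)) with (- (c (1 - t) * u' (1 - t)))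
      by ring.
    rewrite Hodd. ring.
  - intros t Ht. apply Hw'. lra.
  - intros t Ht. apply Hforcing. lra.
  - intros t Ht. apply Hcd. lra.
  - intros t Ht. apply Hbound. lra.
  - replace (1 - (1 - q)) with q by ring. exact Huq.
  - replace (1 - (1 - t0)) with t0 by ring. lra.
Qed.

(* For a positive solution the flux is nonincreasing and forced by
   lam h0 mf phi(u) on [a,b]; according to the sign of the flux at t0 one of
   the two one-sided estimates applies. *)
Section PositiveSolution.
Variables phi psi1 psi2 c d h f u : R -> R.
Variables lam mf h0 p a t0 b q Cc Dd : R.
Hypothesis Hphi : odd_inc_homeo phi.
Hypothesis HA : condA phi psi1 psi2.
Hypothesis Hc_pos : forall t, 0 <= t <= 1 -> 0 < c t.
Hypothesis Hd_pos : forall t, 0 <= t <= 1 -> 0 < d t.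
Hypothesis Hf_nonneg : forall s, 0 <= s -> 0 <= f s.
Hypothesis Hf_lower : forall s, 0 < s -> mf * phi s <= f s.
Hypothesis Hmf : 0 <= mf.
Hypothesis Hh_nonneg : forall t, 0 < t < 1 -> 0 <= h t.
Hypothesis Hh_lower : forall t, a <= t <= b -> h0 <= h t.
Hypothesis Hh0 : 0 <= h0.
Hypothesis Hlam : 0 <= lam.
Hypothesis Hord : 0 < p /\ p < a /\ a < t0 /\ t0 < b /\ b < q /\ q < 1.
Hypothesis Hcd_bound : forall t, p <= t <= q -> c t <= Cc /\ d t <= Dd.
Hypothesis Hu : is_positive_solution phi c d h f lam u.

Lemma positive_solution_flux_bound :
  lam * (h0 * mf * (t0 - a)) <= Dd * psi2 (Cc / (a - p)) \/
  lam * (h0 * mf * (b - t0)) <= Dd * psi2 (Cc / (q - b)).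
Proof.
  destruct Hu as [[_ [u' [Hu' [_ [w' [Hw' [_ [Heq _]]]]]]]] Hupos].
  set (W := fun s => d s * phi (c s * u' s)).
  assert (Hw'_nonpos : forall t, 0 < t < 1 -> w' t <= 0).
  { intros t Ht. pose proof (Heq t Ht). pose proof (Hh_nonneg t Ht).
    pose proof (Hf_nonneg (u t) (Rlt_le _ _ (Hupos t Ht))).
    assert (0 <= lam * h t * f (u t)) by (repeat apply Rmult_le_pos; lra). lra. }
  assert (Hforcing : forall t, a <= t <= b -> lam * h0 * mf * phi (u t) <= - w' t).
  { intros t Ht. replace (- w' t) with (lam * h t * f (u t))
      by (pose proof (Heq t ltac:(lra)); lra).
    pose proof (Hf_lower (u t) (Hupos t ltac:(lra))).
    pose proof (phi_pos phi Hphi (u t) (Hupos t ltac:(lra))).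
    pose proof (Hh_lower t Ht).
    assert (h0 * (mf * phi (u t)) <= h t * f (u t)) by (apply Rmult_le_compat; nra).
    replace (lam * h0 * mf * phi (u t)) with (lam * (h0 * (mf * phi (u t)))) by ring.
    rewrite Rmult_assoc. apply Rmult_le_compat_l; lra. }
  assert (Hm : 0 <= lam * h0 * mf) by (repeat apply Rmult_le_pos; lra).
  destruct (Rle_or_lt 0 (W t0)) as [HW | HW]; [left | right];
    rewrite <- Rmult_assoc, <- Rmult_assoc.
  - apply (one_sided_bound phi psi1 psi2 Hphi HA u u' W w' c d _ p a t0); try lra.
    + intros t Ht. apply Hu'. lra.
    + intros t Ht. apply Hw'. lra.
    + intros t Ht. reflexivity.
    + intros t Ht. apply Hw'_nonpos. lra.
    + intros t Ht. apply Hforcing. lra.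
    + intros t Ht. split; [apply Hc_pos | apply Hd_pos]; lra.
    + intros t Ht. apply Hcd_bound. lra.
    + apply Hupos. lra.
  - apply (one_sided_bound_right phi psi1 psi2 u u' W w' c d _ t0 b q Cc Dd Hphi HA); try lra.
    + intros t Ht. apply Hu'. lra.
    + intros t Ht. apply Hw'. lra.
    + intros t Ht. reflexivity.
    + intros t Ht. apply Hw'_nonpos. lra.
    + intros t Ht. apply Hforcing. lra.
    + intros t Ht. split; [apply Hc_pos | apply Hd_pos]; lra.
    + intros t Ht. apply Hcd_bound. lra.
    + apply Hupos. lra.
Qed.
End PositiveSolution.

Lemma le_div_of_mul_le (lam x y : R) : 0 < y -> lam * y <= x -> lam <= x / y.
Proof.
  intros Hy H. apply Rmult_le_reg_r with y; auto.
  unfold Rdiv. rewrite Rmult_assoc, Rinv_l; lra.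
Qed.

Theorem theorem3p7
  (phi psi1 psi2 c d f h : R -> R)
  (Hphi : odd_inc_homeo phi)
  (HA : condA phi psi1 psi2)
  (Hc_cont : cont_on_cc c 0 1) (Hc_pos : forall t, 0 <= t <= 1 -> 0 < c t)
  (Hd_cont : cont_on_cc d 0 1) (Hd_pos : forall t, 0 <= t <= 1 -> 0 < d t)
  (Hf_cont : cont_on_nonneg f) (Hf_nonneg : forall s, 0 <= s -> 0 <= f s)
  (Hf_pos : forall s, 0 < s -> 0 < f s)
  (Hh_cont : forall t, 0 < t < 1 -> continuity_pt h t)
  (Hh_nonneg : forall t, 0 < t < 1 -> 0 <= h t)
  (Hh_nz : exists t, 0 < t < 1 /\ h t <> 0)
  (Hh_int : h_integrability psi1 h)
  (Hh_gamma : h_gamma_assumption h)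
  (Hf0 : f0_pos phi f) (Hfinf : finf_pos phi f) :
  exists lam0, 0 < lam0 /\
    forall lam, lam0 < lam -> ~ exists u, is_positive_solution phi c d h f lam u.
Proof.
  destruct (f_lower_bound phi f Hphi Hf_cont Hf_pos Hf0 Hfinf) as [mf [Hmf Hf_lower]].
  destruct (h_positive_segment h Hh_cont Hh_nonneg Hh_nz)
    as [a [b [h0 [Hab [Hb1 [Hh0 Hh_lower]]]]]].
  set (t0 := (a + b) / 2); set (p := a / 2); set (q := (1 + b) / 2).
  assert (Hord : 0 < p /\ p < a /\ a < t0 /\ t0 < b /\ b < q /\ q < 1)
    by (unfold p, t0, q; lra).
  destruct (bounded_on_inner_segment c p q Hc_cont) as [Cc HCc]; try lra.
  destruct (bounded_on_inner_segment d p q Hd_cont) as [Dd HDd]; try lra.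
  assert (Hcd_bound : forall t, p <= t <= q -> c t <= Cc /\ d t <= Dd)
    by (intros t Ht; split; [apply HCc | apply HDd]; exact Ht).
  set (K1 := Dd * psi2 (Cc / (a - p)) / (h0 * mf * (t0 - a))).
  set (K2 := Dd * psi2 (Cc / (q - b)) / (h0 * mf * (b - t0))).
  exists (Rmax 0 (Rmax K1 K2) + 1). split; [pose proof (Rmax_l 0 (Rmax K1 K2)); lra|].
  intros lam Hlam [u Hu].
  pose proof (Rmax_l 0 (Rmax K1 K2)); pose proof (Rmax_r 0 (Rmax K1 K2)).
  pose proof (Rmax_l K1 K2); pose proof (Rmax_r K1 K2).
  destruct (positive_solution_flux_bound phi psi1 psi2 c d h f u lam mf h0 p a t0 b q Cc Dd
              Hphi HA Hc_pos Hd_pos Hf_nonneg Hf_lower ltac:(lra) Hh_nonneg Hh_lower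
              ltac:(lra) ltac:(lra) Hord Hcd_bound Hu) as [Hbound | Hbound].
  - apply le_div_of_mul_le in Hbound; [fold K1 in Hbound; lra|].
    repeat apply Rmult_lt_0_compat; lra.
  - apply le_div_of_mul_le in Hbound; [fold K2 in Hbound; lra|].
    repeat apply Rmult_lt_0_compat; lra.
Qed.
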